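(* Let $L$ be a finite simplicial complex and $L^\circ=L\cup\{\varnothing\}$. For $x\in L^\circ$ put $\mu_L(x)=1-\chi(\operatorname{lk}_Lx)$, with the convention $\operatorname{lk}_L\varnothing=L$. Then for all $y,z\in L^\circ$, $$\sum_{x\in L^\circ,\ x\cap y=z}\mu_L(x)=\begin{cases}1&\text{if } y=z,\\0&\text{otherwise.}\end{cases}$$
   Context: $\chi$ is the Euler characteristic and $\operatorname{lk}_Lx$ the link of the simplex $x$ in $L$ (the empty complex has $\chi=0$). The intersection of two simplices of $L$ is a common face or empty, hence an element of $L^\circ$. *)

From mathcomp Require Import all_boot all_order all_algebra.
Set Implicit Arguments. Unset Strict Implicit. Unset Printing Implicit Defensive.
Import GRing.Theory Num.Theory.
Local Open Scope ring_scope.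

Definition simplicial_complex (V : finType) (L : {set {set V}}) : Prop :=
  set0 \notin L /\
  (forall s t : {set V}, s \in L -> t \subset s -> t != set0 -> t \in L).

Definition Lcirc (V : finType) (L : {set {set V}}) : {set {set V}} :=
  set0 |: L.

(* Link of x in L: simplices s of L disjoint from x with s ∪ x ∈ L.
   For x = ∅ this is L itself (matching the convention lk_L ∅ = L). *)
Definition link (V : finType) (L : {set {set V}}) (x : {set V}) : {set {set V}} :=
  [set s in L | [disjoint s & x] && (s :|: x \in L)].

Definition euler_char (V : finType) (K : {set {set V}}) : int :=
  \sum_(s in K) (-1) ^+ (#|s|.-1).

Definition mu (V : finType) (L : {set {set V}}) (x : {set V}) : int :=
  1 - euler_char (link L x).

From mathcomp Require Import all_boot all_order all_algebra.
Import GRing.Theory Num.Theory.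
Local Open Scope ring_scope.
Set Implicit Arguments. Unset Strict Implicit.

(* Writing sgset x = (-1)^|x|, the Euler characteristic of the link of x, after
   adjoining x to each of its simplices, gives
     mu x = sgset x * \sum_(w in L°, x \subset w) sgset w.
   Exchanging the sums, each w in L° contributes
     sgset w * \sum_(x \subset w, x :&: y = z) sgset x,
   which vanishes by toggling a vertex of w outside y unless w \subset y, in
   which case only x = z remains.  What is left is the alternating sum over the
   interval z \subset w \subset y of the boolean lattice, which is 0 unless z = y. *)

Lemma sum_involution_opp (R : numDomainType) (I : finType) (f : I -> I)
    (P : pred I) (F : I -> R) :
  involutive f -> (forall i, P i -> P (f i)) -> (forall i, F (f i) = - F i) ->
  \sum_(i | P i) F i = 0.
Proof.
move=> fK Pf Ff; set S := \sum_(i | P i) F i.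
have S_opp : S = - S.
  rewrite -sumrN {1}/S (reindex_inj (inv_inj fK)) /=.
  apply: eq_big => [i | i _]; last exact: Ff.
  by apply/idP/idP => [/Pf | /Pf]; rewrite ?fK.
apply/eqP; rewrite -[S == 0]orFb -(mulrn_eq0 S 2).
by rewrite mulr2n {2}S_opp subrr.
Qed.

Section SetSigns.
Variable V : finType.
Implicit Types (a : V) (s t w x y z : {set V}).

Definition sgset x : int := (-1) ^+ #|x|.

Lemma sgset0 : sgset set0 = 1.
Proof. by rewrite /sgset cards0. Qed.

Lemma sgsetM_id x : sgset x * sgset x = 1.
Proof. by rewrite -expr2 sqrr_sign. Qed.

Lemma sgsetU_disjoint s t : [disjoint s & t] -> sgset (s :|: t) = sgset s * sgset t.
Proof. by move=> /disjoint_setI0 st0; rewrite /sgset cardsU st0 cards0 subn0 exprD. Qed.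

Lemma sgset_predn s : s != set0 -> (-1) ^+ #|s|.-1 = - sgset s :> int.
Proof. by rewrite -card_gt0 /sgset; case: #|s| => // n _; rewrite exprS mulN1r opprK. Qed.

Definition toggle a x := if a \in x then x :\ a else a |: x.

Lemma in_toggle a x b : (b \in toggle a x) = (if b == a then a \notin x else b \in x).
Proof. by rewrite /toggle; case: ifP => ax; rewrite !inE; case: eqP => // ->. Qed.

Lemma toggleK a : involutive (toggle a).
Proof.
move=> x; apply/setP => b; rewrite !in_toggle eqxx negbK.
by case: eqP => [-> |].
Qed.

Lemma sgset_toggle a x : sgset (toggle a x) = - sgset x.
Proof.
rewrite /sgset /toggle; case: ifPn => ax; last by rewrite cardsU1 ax exprS mulN1r.
by rewrite [in RHS](cardsD1 a x) ax exprS mulN1r opprK.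
Qed.

Lemma toggle_sub a x w : x \subset w -> a \in w -> toggle a x \subset w.
Proof.
move=> xw aw; apply/subsetP => b; rewrite in_toggle.
by case: eqP => [-> // | _ /(subsetP xw)].
Qed.

Lemma sub_toggle a z x : z \subset x -> a \notin z -> z \subset toggle a x.
Proof.
move=> zx az; apply/subsetP => b bz; rewrite in_toggle.
by case: eqP => [eq_ba | _]; [move: az; rewrite -eq_ba bz | exact: (subsetP zx)].
Qed.

Lemma toggleI a x y : a \notin y -> toggle a x :&: y = x :&: y.
Proof.
move=> ay; apply/setP => b; rewrite !inE in_toggle.
by case: eqP => [-> | _]; rewrite ?(negbTE ay) ?andbF.
Qed.

Lemma sum_sgset_toggle_closed a (P : pred {set V}) :
  (forall x, P x -> P (toggle a x)) -> \sum_(x | P x) sgset x = 0.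
Proof. by move=> Pa; apply: (sum_involution_opp (toggleK a) Pa (sgset_toggle a)). Qed.

Lemma sum_sgset_interval z y :
  \sum_(w : {set V} | (z \subset w) && (w \subset y)) sgset w = if z == y then sgset y else 0.
Proof.
case: eqVneq => [<- | zy].
  by rewrite (eq_bigl (pred1 z)) ?big_pred1_eq // => w; rewrite /= andbC -eqEsubset.
have [zsy | nzsy] := boolP (z \subset y); last first.
  by apply: big1 => w /andP[zw wy]; case/negP: nzsy; apply: subset_trans zw wy.
have [a ay az] : exists2 a, a \in y & a \notin z.
  by apply/subsetPn; apply: contra_neqN zy => yz; apply/eqP; rewrite eqEsubset zsy.
by apply: (sum_sgset_toggle_closed (a := a)) => w /andP[zw wy];
  rewrite toggle_sub ?sub_toggle.
Qed.

Lemma sum_sgset_subI w y z :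
  \sum_(x : {set V} | (x \subset w) && (x :&: y == z)) sgset x =
  if (z \subset w) && (w \subset y) then sgset z else 0.
Proof.
have [wy | /subsetPn[a aw ay]] := boolP (w \subset y); last first.
  rewrite andbF; apply: (sum_sgset_toggle_closed (a := a)) => x /andP[xw xyz].
  by rewrite toggle_sub // toggleI.
have xyE x : x \subset w -> x :&: y = x by move=> xw; apply/setIidPl/(subset_trans xw wy).
rewrite andbT; case: ifPn => zw.
  rewrite (eq_bigl (pred1 z)) ?big_pred1_eq // => x /=.
  apply/andP/eqP => [[xw] | ->]; first by rewrite xyE // => /eqP.
  by rewrite zw xyE.
by apply: big1 => x /andP[xw]; rewrite xyE // => /eqP xz; move: zw; rewrite -xz xw.
Qed.

End SetSigns.

Section Complex.
Variables (V : finType) (L : {set {set V}}).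
Hypothesis HL : simplicial_complex L.
Implicit Types (s t w x : {set V}).

Lemma Lcirc_sub w x : w \in Lcirc L -> x \subset w -> x \in Lcirc L.
Proof.
rewrite !inE => /orP[/eqP-> | wL] xw; first by rewrite -subset0 xw.
by case: eqVneq => //= x0; apply: HL.2 wL xw x0.
Qed.

Lemma sum_sgset_Lcirc (K : {set {set V}}) :
  set0 \notin K -> \sum_(s in Lcirc K) sgset s = 1 - euler_char K.
Proof.
move=> K0; rewrite big_setU1 //= sgset0 /euler_char -sumrN; congr (_ + _).
by apply: eq_bigr => s sK; rewrite sgset_predn ?opprK //; apply: contraNneq K0 => <-.
Qed.

Lemma link_star x : x \in Lcirc L ->
  [set t :|: x | t in Lcirc (link L x)] = [set w in Lcirc L | x \subset w].
Proof.
move=> xL; apply/setP => w; rewrite inE; apply/imsetP/andP.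
  case=> t /setU1P[-> | tlk] ->; first by rewrite set0U.
  by move: tlk; rewrite inE => /and3P[_ _ txL]; rewrite /Lcirc in_setU1 txL orbT subsetUr.
case=> wL xw; have wE : w :\: x :|: x = w by rewrite setUC -{1}(setIidPr xw) setID.
exists (w :\: x); rewrite ?wE //.
rewrite /Lcirc in_setU1; case: eqVneq => //= wx0.
have w0 : w != set0 by apply: contraNneq wx0 => ->; rewrite set0D.
have wL' : w \in L by move: wL; rewrite /Lcirc in_setU1 (negbTE w0).
by rewrite in_set wE wL' (HL.2 _ _ wL' (subsetDl w x) wx0) disjoints_subset setDE subsetIr.
Qed.

Lemma muE x : x \in Lcirc L ->
  mu L x = sgset x * \sum_(w in Lcirc L | x \subset w) sgset w.
Proof.
move=> xL; have link0 : set0 \notin link L x by rewrite inE (negbTE HL.1).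
have disj t : t \in Lcirc (link L x) -> [disjoint t & x].
  rewrite /Lcirc in_setU1 in_set => /orP[/eqP-> | /and3P[_ ? _]] //.
  by rewrite disjoints_subset sub0set.
have -> : \sum_(w in Lcirc L | x \subset w) sgset w =
          \sum_(w in [set w in Lcirc L | x \subset w]) sgset w.
  by apply: eq_bigl => w; rewrite inE.
rewrite /mu -sum_sgset_Lcirc // -link_star // big_imset /=; last first.
  by move=> s t /disj/setDidPl sx /disj/setDidPl tx /(congr1 (fun w => w :\: x));
    rewrite !setDUl setDv !setU0 sx tx.
rewrite mulr_sumr; apply: eq_bigr => t /disj tx.
by rewrite sgsetU_disjoint // mulrCA sgsetM_id mulr1.
Qed.

Lemma sum_mu_exchange (P : pred {set V}) :
  \sum_(x in Lcirc L | P x) mu L x =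
  \sum_(w in Lcirc L) sgset w * \sum_(x : {set V} | (x \subset w) && P x) sgset x.
Proof.
rewrite (eq_bigr _ (fun x xP => muE (proj1 (andP xP)))).
under eq_bigr do rewrite mulr_sumr.
rewrite (exchange_big_dep (mem (Lcirc L))) /=; last by move=> x w _ /andP[].
apply: eq_bigr => w wL; rewrite mulr_sumr; apply: eq_big => [x | x _]; last exact: mulrC.
have [xw | _] := boolP (x \subset w); last by rewrite !andbF.
by rewrite (Lcirc_sub wL xw) wL /= andbT.
Qed.

End Complex.

Theorem mainTheorem9 (V : finType) (L : {set {set V}})
    (HL : simplicial_complex L) (y z : {set V})
    (Hy : y \in Lcirc L) (Hz : z \in Lcirc L) :
  \sum_(x in Lcirc L | x :&: y == z) mu L x = (if y == z then 1 else 0).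
Proof.
rewrite (sum_mu_exchange HL (fun x => x :&: y == z)) /=.
under eq_bigr do rewrite sum_sgset_subI (fun_if (GRing.mul _)) mulr0.
rewrite -big_mkcondr -mulr_suml /= (eq_bigl (fun w : {set V} => (z \subset w) && (w \subset y))); last first.
  by move=> w; apply/andP/idP => [[] // | /andP[zw wy]]; rewrite (Lcirc_sub HL Hy wy) zw wy.
rewrite sum_sgset_interval eq_sym.
by case: eqVneq => [-> | _]; rewrite ?sgsetM_id ?mul0r.
Qed.
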